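(* Let $X$ be a Banach space of analytic functions on $\mathbb{U}$ such that the sequence $\{u_n\}$, $u_n(z)=z^n$, is contained in and bounded in $X$, and let $E\hookrightarrow\ell_\infty$ be a Banach sequence lattice. Let $\lambda=\{\lambda_n\}$ be such that the multiplier operator $M_\lambda\colon X\to E$, $M_\lambda f=\{\lambda_n\hat f(n)\}$, is defined. If $M_\lambda\colon X\to E$ is compact, then \[\limsup_{n\to\infty}|\lambda_n|=0.\]
   Context: $\mathbb{U}$ is the open unit disk and $f=\sum_{n\ge0}\hat f(n)u_n$ the Taylor expansion; ''$\hookrightarrow$'' denotes continuous inclusion. A Banach sequence lattice on $\mathbb{Z}_+$ is a Banach space $E$ of sequences with $|y_n|\le|x_n|$ for all $n$, $x\in E$ implying $y\in E$ and $\|y\|_E\le\|x\|_E$. *)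

From HB Require Import structures.
From mathcomp Require Import all_boot all_order all_algebra.
From mathcomp Require Import complex.
From mathcomp Require Import all_classical all_reals all_analysis.
Import Order.TTheory GRing.Theory Num.Theory.
Import numFieldTopology.Exports numFieldNormedType.Exports.

Set Implicit Arguments.
Unset Strict Implicit.
Unset Printing Implicit Defensive.

Local Open Scope classical_set_scope.
Local Open Scope ring_scope.

HB.instance Definition _ (R : rcfType) := PseudoPointedMetric.copy R[i] R[i]^o.
HB.instance Definition _ (R : rcfType) := NormedModule.copy R[i] R[i]^o.

Definition unit_disk (R : realType) : set R[i] := [set z | `|z| < 1].

Definition analytic_on_disk (R : realType) (f : R[i] -> R[i]) : Prop :=
  exists a : nat -> R[i], forall z, @unit_disk R z ->
    series (fun n => a n * z ^+ n) @ \oo --> f z.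

(* Taylor coefficients \hat f(n) of a function analytic on U (the coefficients
   of a power series representing f on U; these are unique).  Junk value 0 if
   f is not analytic on U. *)
Definition taylor_coef (R : realType) (f : R[i] -> R[i]) (n : nat) : R[i] :=
  match pselect (analytic_on_disk f) with
  | left H => sval (cid H) n
  | right _ => 0
  end.

(* X (a complete normed space over C) is a Banach space of analytic functions on U:
   its elements are realised, via iota, as analytic functions on U, with the
   pointwise vector operations, and distinct elements are distinct functions. *)
Definition banach_space_of_analytic_functions (R : realType)
    (X : completeNormedModType R[i]) (iota : X -> R[i] -> R[i]) : Prop :=
  [/\ forall (a : R[i]) (f g : X) z, @unit_disk R z ->
        iota (a *: f + g) z = a * iota f z + iota g z,
      forall f g : X, (forall z, @unit_disk R z -> iota f z = iota g z) -> f = g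
    & forall f : X, analytic_on_disk (iota f)].

(* E (a complete normed space over C) is a Banach sequence lattice on Z_+:
   its elements are realised, via j, as complex sequences (pointwise vector
   operations, injective), and the lattice (solidity) property holds. *)
Definition banach_sequence_lattice (R : realType)
    (E : completeNormedModType R[i]) (j : E -> nat -> R[i]) : Prop :=
  [/\ forall (a : R[i]) (x y : E) n, j (a *: x + y) n = a * j x n + j y n,
      injective j
    & forall (x : E) (y : nat -> R[i]), (forall n, `|y n| <= `|j x n|) ->
        exists y' : E, j y' = y /\ `|y'| <= `|x| ].

(* E \hookrightarrow \ell_\infty : continuous inclusion into bounded sequences. *)
Definition embeds_in_linfty (R : realType)
    (E : completeNormedModType R[i]) (j : E -> nat -> R[i]) : Prop :=
  exists c : R[i], 0 < c /\ forall (x : E) n, `|j x n| <= c * `|x|.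

Definition compact_operator (R : realType) (X Y : normedModType R[i])
    (T : X -> Y) : Prop :=
  forall B : set X, bounded_set B -> compact (closure (T @` B)).

(* The Taylor coefficients of [u n] form the Kronecker delta at [n], so
   [M (u n)] is [lambda n] times the [n]-th unit sequence.  If [|lambda n|]
   does not tend to [0], a subsequence [M (u (phi k))] stays at norm at least
   [e / C], where [C] is the constant of [E -> l_oo], while each of its
   coordinates is eventually [0].  By compactness it has a cluster point; its
   coordinates, being bounded functionals, vanish, so it is [0]: contradiction. *)

From HB Require Import structures.
From mathcomp Require Import all_boot all_order all_algebra.
From mathcomp Require Import complex.
From mathcomp Require Import all_classical all_reals all_analysis.
From mathcomp Require Import lra.
Import Order.TTheory GRing.Theory Num.Theory.
Import numFieldTopology.Exports numFieldNormedType.Exports.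

Set Implicit Arguments.
Unset Strict Implicit.
Unset Printing Implicit Defensive.

Local Open Scope classical_set_scope.
Local Open Scope ring_scope.
Local Open Scope complex_scope.

Local Notation normc := Normc.normc.

Section PowerSeriesUniqueness.
Variable R : realType.
Implicit Types (c : nat -> R[i]) (t : R).

Lemma normC_normc (x : R[i]) : `|x| = (normc x)%:C.
Proof. by []. Qed.

Lemma normc_ge0 (x : R[i]) : 0 <= normc x.
Proof. by case: x => a b; rewrite /Normc.normc sqrtr_ge0. Qed.

Lemma normc_real t : normc t%:C = `|t|.
Proof. by rewrite /Normc.normc /= expr0n /= addr0 sqrtr_sqr. Qed.

Lemma normc_mul_realX (a : R[i]) t k :
  0 <= t -> normc (a * t%:C ^+ k) = normc a * t ^+ k.
Proof.
by move=> t0; rewrite Normc.normcM -rmorphXn normc_real ger0_norm ?exprn_ge0.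
Qed.

Lemma series_terms_bounded c t (l : R[i]) : 0 <= t ->
  series (fun k => c k * t%:C ^+ k) @ \oo --> l ->
  exists2 B, 0 <= B & forall k, normc (c k) * t ^+ k <= B.
Proof.
move=> t0 /cvgP/cvg_series_cvg_0/cvgP/cvg_seq_bounded.
move=> /(@ex_bound _ _ _ _ _ (@globally_properfilter nat setT 0%N I)) [M cM].
exists (complex.Re M).
  have := cM 0%N I; rewrite /= lecE => /andP[_].
  by apply: le_trans; exact: normc_ge0.
move=> k; have := cM k I; rewrite /= normC_normc lecE => /andP[_].
by rewrite normc_mul_realX.
Qed.

(* The terms after [c m t^m] are dominated by [B (2 t)^k], a geometric series
   of ratio [2 t <= 1/2]; hence the factor [2]. *)
Lemma series_sub_first_le c m B t :
  (forall k, (k < m)%N -> c k = 0) ->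
  (forall k, normc (c k) * (2^-1) ^+ k <= B) -> 0 <= t -> t <= 4^-1 ->
  forall N, (m < N)%N ->
  normc (series (fun k => c k * t%:C ^+ k) N - c m * t%:C ^+ m)
    <= 2 * B * (2 * t) ^+ m.+1.
Proof.
move=> c_lt0 cB t0 t4.
have B0 : 0 <= B by apply: le_trans (cB 0%N); rewrite mulr_ge0 ?normc_ge0.
have tail d : normc (series (fun k => c k * t%:C ^+ k) (m.+1 + d)%N
                       - c m * t%:C ^+ m)
              <= 2 * B * ((2 * t) ^+ m.+1 - (2 * t) ^+ (m.+1 + d)%N).
  elim: d => [|d IH].
    have S0 : series (fun k => c k * t%:C ^+ k) m = 0.
      rewrite /series /= big_mkord big1 // => k _.
      by rewrite (c_lt0 _ (ltn_ord k)) mul0r.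
    by rewrite addn0 seriesSr S0 add0r !subrr Normc.normc0 mulr0.
  rewrite addnS seriesSr addrAC; apply: le_trans (le_normcD _ _) _.
  set N := (m.+1 + d)%N in IH *.
  have cN : normc (c N * t%:C ^+ N) <= B * (2 * t) ^+ N.
    have -> : normc (c N * t%:C ^+ N) = normc (c N) * 2^-1 ^+ N * (2 * t) ^+ N.
      rewrite normc_mul_realX // -mulrA -exprMn mulrA.
      by rewrite mulVf ?mul1r // pnatr_eq0.
    by rewrite ler_wpM2r ?exprn_ge0 ?mulr_ge0.
  apply: le_trans (lerD IH cN) _.
  have BQ : 0 <= B * (2 * t) ^+ N by rewrite mulr_ge0 ?exprn_ge0 ?mulr_ge0.
  rewrite [(2 * t) ^+ N.+1]exprS.
  set Q := (2 * t) ^+ N in BQ *; set P := (2 * t) ^+ m.+1; nra.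
move=> N /subnKC <-; apply: le_trans (tail _) _.
by rewrite ler_wpM2l ?mulr_ge0 // lerBlDr lerDl exprn_ge0 ?mulr_ge0.
Qed.

Lemma le0_of_le_linear (a K : R) : 0 <= K ->
  (forall t, 0 < t -> t <= 4^-1 -> a <= K * t) -> a <= 0.
Proof.
move=> K0 aK; apply/ler_addgt0Pr => e e0; rewrite add0r.
pose t := e / (4 * (K + e)).
have tD : t * (4 * (K + e)) = e by rewrite mulfVK // gt_eqF //; lra.
have t0 : 0 < t by rewrite divr_gt0 //; lra.
have Kt : 0 <= K * t by rewrite mulr_ge0 // ltW.
apply: le_trans (aK t t0 _) _; nra.
Qed.

Lemma series_coef_eq0 c m :
  (forall t, 0 <= t -> t <= 2^-1 ->
     series (fun k => c k * t%:C ^+ k) @ \oo --> 0) ->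
  (forall k, (k < m)%N -> c k = 0) -> c m = 0.
Proof.
move=> c_sum0 c_lt0.
have half_ge0 : 0 <= 2^-1 :> R by rewrite invr_ge0.
have [B B0 cB] := series_terms_bounded half_ge0 (c_sum0 _ half_ge0 (lexx _)).
apply: Normc.eq0_normc; apply/eqP; rewrite eq_le normc_ge0 andbT.
apply: (@le0_of_le_linear _ (2 * B * 2 ^+ m.+1)) => [|t t0 t4].
  by rewrite !mulr_ge0 ?exprn_ge0.
(* [c m t^m] is the limit [0] of the partial sums minus the tail. *)
have cm_le : normc (c m) * t ^+ m <= 2 * B * (2 * t) ^+ m.+1.
  have t2 : t <= 2^-1 by lra.
  apply/ler_addgt0Pr => e e0.
  have /cvgrPdist_lt/(_ e%:C) := c_sum0 t (ltW t0) t2.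
  rewrite ltcR => /(_ e0) [N0 _ S_lt].
  have /= := S_lt (m.+1 + N0)%N (leq_addl _ _).
  rewrite sub0r normrN normC_normc ltcR.
  set S := series _ _ => S_lte.
  have := series_sub_first_le c_lt0 cB (ltW t0) t4 (leq_addr N0 m.+1).
  rewrite -/S -normc_mul_realX ?(ltW t0) // => tail_le.
  have := le_normcD S (- (S - c m * t%:C ^+ m)).
  rewrite normcN opprB addrC subrK => /le_trans; apply.
  by rewrite addrC lerD // ltW.
rewrite -(ler_pM2r (exprn_gt0 m t0)); apply: le_trans cm_le _.
by rewrite exprMn [t ^+ m.+1]exprSr !mulrA mulrAC.
Qed.

Lemma power_series_eq0 c :
  (forall t, 0 <= t -> t <= 2^-1 ->
     series (fun k => c k * t%:C ^+ k) @ \oo --> 0) ->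
  forall k, c k = 0.
Proof. by move=> c_sum0; elim/ltn_ind => m IH; exact: series_coef_eq0. Qed.

End PowerSeriesUniqueness.

Lemma power_series_unique_disk (R : realType) (f : R[i] -> R[i])
    (a b : nat -> R[i]) :
  (forall z, unit_disk z -> series (fun k => a k * z ^+ k) @ \oo --> f z) ->
  (forall z, unit_disk z -> series (fun k => b k * z ^+ k) @ \oo --> f z) ->
  a =1 b.
Proof.
move=> fa fb k; apply/eqP; rewrite -subr_eq0; apply/eqP; move: k.
apply: power_series_eq0 => t t0 t2.
have tU : unit_disk t%:C.
  by rewrite /unit_disk /= normC_normc normc_real ltcR ger0_norm //; lra.
have -> : series (fun k => (a k - b k) * t%:C ^+ k) =
    series (fun k => a k * t%:C ^+ k) - series (fun k => b k * t%:C ^+ k).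
  apply/funext => N; rewrite /series /= !fctE -sumrB.
  by apply: eq_bigr => k _; rewrite mulrBl.
by rewrite -(subrr (f t%:C)); apply: cvgB; [exact: fa | exact: fb].
Qed.

Lemma taylor_coefE (R : realType) (f : R[i] -> R[i]) (a : nat -> R[i]) :
  (forall z, unit_disk z -> series (fun k => a k * z ^+ k) @ \oo --> f z) ->
  taylor_coef f =1 a.
Proof.
move=> fa k; rewrite /taylor_coef; case: pselect => [f_an | []]; last by exists a.
by case: cid => b fb /=; exact: (power_series_unique_disk fb fa k).
Qed.

Lemma series_monomial (R : realType) (z : R[i]) (n : nat) :
  series (fun k => (k == n)%:R * z ^+ k) @ \oo --> z ^+ n.
Proof.
apply: cvg_near_cst; exists n.+1 => // N /= nN.
rewrite /series /= big_mkord (bigD1 (Ordinal nN)) //= eqxx mul1r big1 ?addr0 //.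
by move=> k /negbTE; rewrite -val_eqE /= => ->; rewrite mul0r.
Qed.

Section CoordinateFunctionals.
Variables (R : realType) (E : normedModType R[i]) (j : E -> nat -> R[i]).
Hypothesis j_linear :
  forall (a : R[i]) (x y : E) n, j (a *: x + y) n = a * j x n + j y n.

Lemma coord0 n : j 0 n = 0.
Proof.
have := j_linear 1 0 0 n; rewrite scale1r addr0 mul1r.
by move=> /(congr1 (fun x => x - j 0 n)); rewrite subrr addrK.
Qed.

Lemma coordB x y n : j (x - y) n = j x n - j y n.
Proof. by rewrite addrC -scaleN1r j_linear mulN1r addrC. Qed.

Hypothesis j_inj : injective j.
Variable C : R[i].
Hypothesis C_gt0 : 0 < C.
Hypothesis coord_le : forall x n, `|j x n| <= C * `|x|.

Lemma coord_eventually0_cluster_eq0 (v : nat -> E) (y : E) :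
  cluster (v @ \oo) y -> (forall n, \forall k \near \oo, j (v k) n = 0) -> y = 0.
Proof.
move=> y_cl v0; apply: j_inj; apply/funext => n; rewrite coord0.
apply/normr0_eq0/eqP; rewrite eq_le normr_ge0 andbT.
apply/ler_addgt0Pr => e e0; rewrite add0r.
have [x [/= jx0]] :=
  y_cl [set x | j x n = 0] _ (v0 n) (nbhsx_ballx y _ (divr_gt0 e0 C_gt0)).
rewrite -ball_normE /= => yx.
have := coord_le (y - x) n; rewrite coordB jx0 subr0 => /le_trans; apply.
by rewrite mulrC -ler_pdivlMr // ltW.
Qed.

End CoordinateFunctionals.

Lemma not_cluster0_norm_ge (K : numFieldType) (V : normedModType K)
    (F : set_system V) (r : K) :
  0 < r -> F [set x | r <= `|x|] -> ~ cluster F 0.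
Proof.
move=> r0 Fr /(_ _ _ Fr (nbhsx_ballx 0 r r0)) [x [/= rx]].
by rewrite -ball_normE /= sub0r normrN => /(le_lt_trans rx); rewrite ltxx.
Qed.

Lemma not_cvg0_subseq (R : realFieldType) (v : nat -> R) : ~ (v @ \oo --> 0) ->
  exists2 e, 0 < e &
    exists phi : nat -> nat, forall k, (k <= phi k)%N /\ e <= `|v (phi k)|.
Proof.
move=> v_ncvg; apply: contrapT => no_subseq; apply: v_ncvg.
apply/cvgrPdist_lt => e e0; apply: contrapT => v_far.
have /choice [phi phiP] : forall K, exists n, (K <= n)%N /\ e <= `|v n|.
  move=> K; apply: contrapT => K_near; apply: v_far; exists K => // n /= Kn.
  rewrite sub0r normrN ltNge; apply/negP => e_le.
  exact: K_near (ex_intro _ n (conj Kn e_le)).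
by apply: no_subseq; exists e => //; exists phi.
Qed.

Lemma limn_esup_cvg0 (R : realType) (v : nat -> R) :
  v @ \oo --> 0 -> limn_esup (fun n => (v n)%:E) = 0%E.
Proof.
move=> v0; have v0E : (fun n => (v n)%:E) @ \oo --> 0%E.
  by apply: cvg_EFin => //; exact: nearW.
by rewrite is_cvg_limn_esupE ?(cvg_lim _ v0E) //; exact: cvgP v0E.
Qed.

Theorem proposition2p2 (R : realType)
    (X : completeNormedModType R[i]) (iota : X -> R[i] -> R[i])
    (u : nat -> X)
    (E : completeNormedModType R[i]) (j : E -> nat -> R[i])
    (lambda : nat -> R[i]) (M : X -> E) :
  banach_space_of_analytic_functions iota ->
  (forall n z, @unit_disk R z -> iota (u n) z = z ^+ n) ->
  bounded_set (range u) ->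
  banach_sequence_lattice j ->
  embeds_in_linfty j ->
  (forall f n, j (M f) n = lambda n * taylor_coef (iota f) n) ->
  compact_operator M ->
  limn_esup (fun n => (Normc.normc (lambda n))%:E) = 0%E.
Proof.
move=> _ iota_u u_bd [j_linear j_inj _] [C [C_gt0 coord_le]] M_coef M_cpt.
have Mu n m : j (M (u n)) m = lambda m * (m == n)%:R.
  by rewrite M_coef (@taylor_coefE _ _ (fun k => (k == n)%:R)) // => z zU;
     rewrite iota_u //; exact: series_monomial.
apply: limn_esup_cvg0; apply: contrapT => /not_cvg0_subseq [e e0 [phi phiP]].
pose v k := M (u (phi k)).
have v_in : (v @ \oo) (closure (M @` range u)).
  exists 0%N => // k _; apply: subset_closure.
  by exists (u (phi k)) => //; exists (phi k).
have [y [_ y_cl]] := M_cpt _ u_bd (v @ \oo) _ v_in.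
have y0 : y = 0.
  apply: (coord_eventually0_cluster_eq0 j_linear j_inj C_gt0 coord_le y_cl) => m.
  exists m.+1 => // k /= mk.
  by rewrite /v Mu (ltn_eqF (leq_trans mk (phiP k).1)) mulr0.
rewrite y0 in y_cl; apply: (not_cluster0_norm_ge (r := e%:C / C)) y_cl.
  by rewrite divr_gt0 // ltcR.
exists 0%N => // k _ /=; rewrite ler_pdivrMr // mulrC.
have := coord_le (v k) (phi k); rewrite /v Mu eqxx mulr1; apply: le_trans.
by rewrite normC_normc lecR -(ger0_norm (normc_ge0 _)) (phiP k).2.
Qed.
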